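(* Let $\mathbb{C}[X]^*$ be the linear dual of the polynomial algebra $\mathbb{C}[X]$, endowed with the convolution product $(f*g)(X^n)=\sum_{k=0}^n\binom{n}{k}f(X^k)g(X^{n-k})$ for $n\geq 0$ (unit $\varepsilon$ with $\varepsilon(X^n)=\delta_{n,0}$), and let $\mathbb{C}[X]^{\circ}\subseteq\mathbb{C}[X]^*$ be the subalgebra of linear forms vanishing on some non-zero ideal of $\mathbb{C}[X]$. Let $J=\{f\in\mathbb{C}[X]^{\circ}\mid f(1)=0\}$. Let $\xi\in\mathbb{C}[X]^*$ be defined by $\xi(X^n)=\delta_{n,1}$, for $\lambda\in\mathbb{C}$ let $\phi_\lambda:\mathbb{C}[X]\to\mathbb{C}$ be the algebra map with $\phi_\lambda(X)=\lambda$, let $G_a=\{\phi_\lambda\mid\lambda\in\mathbb{C}\}$ (a group under convolution, $\phi_\lambda*\phi_\mu=\phi_{\lambda+\mu}$, identity $\phi_0=\varepsilon$), let $\mathbb{C}G_a$ be its group algebra with counit $\varepsilon_a(\phi_\lambda)=1$, and let $\Psi:\mathbb{C}[\xi]\otimes\mathbb{C}G_a\to\mathbb{C}[X]^{\circ}$, $\xi^n\otimes\phi_\lambda\mapsto\xi^n*\phi_\lambda$, be the (Hopf) algebra isomorphism. Then $\Psi$ induces an isomorphism of vector spaces $$\mathbb{C}\bar{\xi}\oplus\frac{\ker(\varepsilon_a)}{\ker(\varepsilon_a)^2}\cong\frac{J}{J^2},$$ where $\bar\xi=\xi+\langle\xi^2\rangle\in\langle\xi\rangle/\langle\xi^2\rangle$;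 explicitly it sends $\bar\xi\mapsto \xi+J^2$ and $x+\ker(\varepsilon_a)^2\mapsto \Psi(1\otimes x)+J^2$.
   Context: $\mathbb{C}[X]$ is the Hopf algebra with $\Delta(X)=X\otimes 1+1\otimes X$, $\varepsilon(X)=0$, $S(X)=-X$. The map $\Psi$ is known to be an isomorphism of Hopf algebras; $\mathbb{C}[\xi]$ is a polynomial algebra in $\xi$ with counit $\varepsilon_\xi(\xi)=0$, and the augmentation of $\mathbb{C}[X]^\circ$ (evaluation at $1$) corresponds under $\Psi$ to $\varepsilon_\xi\otimes\varepsilon_a$. *)

From mathcomp Require Import all_boot all_algebra finmap.
From mathcomp Require Import complex.
From mathcomp Require Import Rstruct.
Set Implicit Arguments. Unset Strict Implicit. Unset Printing Implicit Defensive.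
Import GRing.Theory.
Local Open Scope ring_scope.

Definition C : numClosedFieldType := (Rdefinitions.R)[i].

(* A linear form f on C[X] is determined by its values f(X^n); we represent
   an element of the linear dual C[X]^* by  n |-> f(X^n). *)
Definition dual := nat -> C.

Definition eval_form (f : dual) (p : {poly C}) : C :=
  \sum_(i < size p) p`_i * f i.

Definition conv (f g : dual) : dual :=
  fun n => \sum_(k < n.+1) 'C(n, k)%:R * f k * g (n - k)%N.

Definition is_ideal (I : {poly C} -> Prop) : Prop :=
  I 0 /\ (forall p q, I p -> I q -> I (p + q)) /\ (forall p q, I p -> I (q * p)).

Definition in_circ (f : dual) : Prop :=
  exists I : {poly C} -> Prop, is_ideal I /\ (exists p, I p /\ p != 0) /\
    (forall q, I q -> eval_form f q = 0).

(* J = { f in C[X]° | f(1) = 0 }  (note 1 = X^0) *)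
Definition inJ (f : dual) : Prop := in_circ f /\ f 0%N = 0.

Definition inJ2 (h : dual) : Prop :=
  exists s : seq (dual * dual), List.Forall (fun uv => inJ uv.1 /\ inJ uv.2) s /\
    forall n, h n = \sum_(uv <- s) conv uv.1 uv.2 n.

Definition xi : dual := fun n => (n == 1%N)%:R.

Definition phi (l : C) : dual := fun n => l ^+ n.

(* The group algebra C G_a : finitely supported functions G_a ~ C -> C,
   a = sum_l a(l) phi_l. *)
Definition GA := {fsfun C -> C with 0}.

Definition eps_a (a : GA) : C := \sum_(l <- finsupp a) a l.

(* product in the group algebra: phi_l phi_m = phi_(l+m) *)
Definition gmul (a b : GA) : C -> C :=
  fun l => \sum_(m <- finsupp a) a m * b (l - m).

Definition in_ker_eps_a (a : GA) : Prop := eps_a a = 0.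

Definition in_ker_eps_a2 (x : GA) : Prop :=
  exists s : seq (GA * GA),
    List.Forall (fun uv => in_ker_eps_a uv.1 /\ in_ker_eps_a uv.2) s /\
    forall l, x l = \sum_(uv <- s) gmul uv.1 uv.2 l.

(* Psi(1 (x) a) = sum_l a(l) phi_l  in C[X]^* *)
Definition Psi1 (a : GA) : dual := fun n => \sum_(l <- finsupp a) a l * phi l n.

(* The map C xi_bar (+) ker(eps_a) -> J,  (c, x) |-> c xi + Psi(1 (x) x) *)
Definition Lmap (c : C) (x : GA) : dual := fun n => c * xi n + Psi1 x n.

(* Every f in C[X]° is a finite linear combination of the forms xi^n * phi_mu, i.e.
   m |-> m (m - 1) ... (m - n + 1) mu^(m - n): if f vanishes on the multiples of
   p = c * prod_z (X - z), then f solves the linear recurrence dual to multiplication by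
   the factors X - z, whose solutions are such combinations; conversely xi^n * phi_mu
   vanishes on the multiples of (X - mu)^(n + 1).  These forms are linearly independent
   and multiply as xi^n phi_mu * xi^k phi_nu = xi^(n + k) phi_(mu + nu).
   Since xi^n phi_mu (n >= 2) and xi phi_mu - xi = xi * (phi_mu - phi_0) lie in J^2, every
   f in J is congruent modulo J^2 to c xi + Psi(1 (x) x), where c is the sum of its
   coefficients on the xi phi_mu and x collects its coefficients on the phi_mu.
   Conversely, reading off coefficients of an element of J^2 = sum u_i * v_i: the
   xi^1-coefficients sum to zero because those of the xi^0-part of each u_i, v_i do, and the
   xi^0-part is the product in C G_a of the xi^0-parts, which lie in ker(eps_a). *)

From mathcomp Require Import all_boot all_algebra finmap.
From mathcomp Require Import ring.
From Stdlib Require Import FunctionalExtensionality.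
Import GRing.Theory Num.Theory.
Local Open Scope ring_scope.

(* [ring] needs the goal stated at type [C] rather than at its unfolded carrier. *)
Ltac ringC := match goal with |- @eq _ ?a ?b => change (@eq C a b); ring end.

Lemma dual_ext (f g : dual) : f =1 g -> f = g.
Proof. exact: functional_extensionality. Qed.

(** * The forms xi^n * phi_mu and their convolution *)

Definition xi_mul (g : dual) : dual := fun m => m%:R * g m.-1.

Fixpoint xiphi (n : nat) (mu : C) : dual :=
  if n is n'.+1 then xi_mul (xiphi n' mu) else phi mu.

Lemma xiphi_at0 n mu : xiphi n mu 0 = (n == 0)%:R.
Proof. by case: n => [|n]; rewrite /= /phi /xi_mul ?expr0 ?mul0r. Qed.

Lemma xiphiS n mu m : xiphi n mu m.+1 = mu * xiphi n mu m + n%:R * xiphi n.-1 mu m.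
Proof.
elim: n m => [|n IH] m; first by rewrite /= /phi exprS mul0r addr0.
rewrite /= /xi_mul /=; case: m => [|m].
  by rewrite mul0r mulr0 add0r xiphi_at0; case: n {IH} => [|n]; rewrite ?mulr0.
have -> : m.+2%:R * xiphi n mu m.+1 = m.+1%:R * xiphi n mu m.+1 + xiphi n mu m.+1.
  by rewrite -[m.+2]addn1 natrD mulrDl mul1r.
rewrite {1}IH; case: n {IH} => [|n]; first by rewrite /= /phi exprS -!natr1; ringC.
by rewrite [xiphi n.+1 _ m.+1]/= /xi_mul /= -!natr1; ringC.
Qed.

Lemma xi_xiphi : xi = xiphi 1 0.
Proof.
apply: dual_ext => -[|[|m]]; rewrite /xi /= /xi_mul /phi ?mul0r //.
  by rewrite expr0 mulr1.
by rewrite expr0n mulr0.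
Qed.

Lemma convC f g : conv f g = conv g f.
Proof.
apply: dual_ext => n; rewrite /conv (reindex_inj rev_ord_inj) /=.
apply: eq_bigr => k _; have kn : (k <= n)%N by rewrite -ltnS.
rewrite subSS bin_sub ?subKn //; ringC.
Qed.

Lemma conv_xil g : conv xi g = xi_mul g.
Proof.
apply: dual_ext => -[|m]; rewrite /conv /xi_mul /xi.
  by rewrite big_ord1 /= !mul0r mulr0 mul0r.
rewrite 2!big_ord_recl big1 => [|k _]; last by rewrite /= mulr0 mul0r.
by rewrite /= !mulr0 !mul0r add0r addr0 bin1 mulr1 subSS subn0.
Qed.

Lemma conv_xi_mull f g : conv (xi_mul f) g = xi_mul (conv f g).
Proof.
apply: dual_ext => -[|m]; rewrite /conv /xi_mul.
  by rewrite big_ord1 /= !mul0r mulr0 mul0r.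
rewrite big_ord_recl /= mul0r mulr0 mul0r add0r mulr_sumr; apply: eq_bigr => j _.
have := congr1 (fun x => x%:R : C) (mul_bin_diag m.+1 j); rewrite /= !natrM => bin_diag.
rewrite subSS /bump /= add1n mulrA (mulrC 'C(_, _)%:R) -bin_diag; ringC.
Qed.

Lemma conv_xi_mulr f g : conv f (xi_mul g) = xi_mul (conv f g).
Proof. by rewrite convC conv_xi_mull convC. Qed.

Lemma conv_phi mu nu : conv (phi mu) (phi nu) = phi (mu + nu).
Proof.
apply: dual_ext => m; rewrite /conv /phi (addrC mu) exprDn.
by apply: eq_bigr => k _; rewrite -mulr_natl; ringC.
Qed.

Lemma conv_xiphi n k mu nu : conv (xiphi n mu) (xiphi k nu) = xiphi (n + k) (mu + nu).
Proof.
elim: n => [|n IH]; last by rewrite /= conv_xi_mull IH.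
by elim: k => [|k IH] /=; rewrite ?conv_phi // conv_xi_mulr IH.
Qed.

Lemma conv_suml (I : Type) (r : seq I) (c : I -> C) (F : I -> dual) g :
  conv (fun m => \sum_(i <- r) c i * F i m) g = fun m => \sum_(i <- r) c i * conv (F i) g m.
Proof.
apply: dual_ext => m; rewrite /conv.
under eq_bigr do rewrite mulr_sumr mulr_suml.
rewrite exchange_big; apply: eq_bigr => i _; rewrite mulr_sumr.
by apply: eq_bigr => k _; ringC.
Qed.

Lemma conv_sumr (I : Type) (r : seq I) (c : I -> C) (F : I -> dual) g :
  conv g (fun m => \sum_(i <- r) c i * F i m) = fun m => \sum_(i <- r) c i * conv g (F i) m.
Proof.
rewrite convC conv_suml; apply: dual_ext => m.
by apply: eq_bigr => i _; rewrite convC.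
Qed.

(** * Finite combinations of the forms *)

(* A term [(n, mu, c)] stands for [c] times [xi^n * phi_mu]. *)
Definition term := (nat * C * C)%type.

Definition coef_sum (r : seq term) (H : nat * C -> C) : C := \sum_(t <- r) t.2 * H t.1.

Definition comb (r : seq term) : dual := fun m => coef_sum r (fun k => xiphi k.1 k.2 m).

Definition spanned (f : dual) : Prop := exists r, f = comb r.

Definition scale_terms (a : C) (r : seq term) : seq term := [seq (t.1, a * t.2) | t <- r].

Lemma coef_sum_cat r1 r2 H : coef_sum (r1 ++ r2) H = coef_sum r1 H + coef_sum r2 H.
Proof. exact: big_cat. Qed.

Lemma coef_sum_scale a r H : coef_sum (scale_terms a r) H = a * coef_sum r H.
Proof. by rewrite /coef_sum big_map mulr_sumr; apply: eq_bigr => t _; rewrite mulrA. Qed.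

Lemma spanned_xiphi n mu : spanned (xiphi n mu).
Proof.
exists [:: (n, mu, 1)]; apply: dual_ext => m.
by rewrite /comb /coef_sum big_seq1 mul1r.
Qed.

Lemma spannedZ a f : spanned f -> spanned (fun m => a * f m).
Proof.
by move=> [r ->]; exists (scale_terms a r); apply: dual_ext => m; rewrite /comb coef_sum_scale.
Qed.

Lemma spanned_lin a b f g : spanned f -> spanned g -> spanned (fun m => a * f m + b * g m).
Proof.
move=> [r1 ->] [r2 ->]; exists (scale_terms a r1 ++ scale_terms b r2).
by apply: dual_ext => m; rewrite /comb coef_sum_cat !coef_sum_scale.
Qed.

Lemma spanned0 : spanned (fun _ => 0).
Proof. by exists [::]; apply: dual_ext => m; rewrite /comb /coef_sum big_nil. Qed.

Definition mul_terms (r1 r2 : seq term) : seq term :=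
  [seq ((t1.1.1 + t2.1.1)%N, t1.1.2 + t2.1.2, t1.2 * t2.2) | t1 <- r1, t2 <- r2].

Lemma coef_sum_mul_terms r1 r2 H : coef_sum (mul_terms r1 r2) H =
  \sum_(t1 <- r1) \sum_(t2 <- r2) t1.2 * t2.2 * H ((t1.1.1 + t2.1.1)%N, t1.1.2 + t2.1.2).
Proof. by rewrite /coef_sum big_allpairs_dep. Qed.

Lemma conv_comb r1 r2 : conv (comb r1) (comb r2) = comb (mul_terms r1 r2).
Proof.
apply: dual_ext => m.
rewrite /comb coef_sum_mul_terms /coef_sum.
rewrite (conv_suml _ r1 (fun t => t.2) (fun t => xiphi t.1.1 t.1.2)); apply: eq_bigr => t1 _.
rewrite (conv_sumr _ r2 (fun t => t.2) (fun t => xiphi t.1.1 t.1.2)) mulr_sumr.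
by apply: eq_bigr => t2 _; rewrite conv_xiphi; ringC.
Qed.

(** * C[X]° is spanned by the forms *)

(* [diffop l] is the transpose of multiplication by ['X - l]. *)
Definition diffop (l : C) (f : dual) : dual := fun m => f m.+1 - l * f m.

Definition diffops (s : seq C) (f : dual) : dual := foldl (fun f l => diffop l f) f s.

Lemma diffops_cat s1 s2 f : diffops (s1 ++ s2) f = diffops s2 (diffops s1 f).
Proof. exact: foldl_cat. Qed.

Lemma diffopZ l a f : diffop l (fun m => a * f m) = fun m => a * diffop l f m.
Proof. by apply: dual_ext => m; rewrite /diffop; ringC. Qed.

Lemma diffop_lin l a b f g :
  diffop l (fun m => a * f m + b * g m) = fun m => a * diffop l f m + b * diffop l g m.
Proof. by apply: dual_ext => m; rewrite /diffop; ringC. Qed.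

Lemma diffops_lin s a b f g :
  diffops s (fun m => a * f m + b * g m) = fun m => a * diffops s f m + b * diffops s g m.
Proof. by elim: s f g => [|l s IH] f g //=; rewrite diffop_lin IH. Qed.

Lemma diffops0 s : diffops s (fun _ => 0) = fun _ => 0.
Proof.
elim: s => [|l s IH] //=; rewrite -[RHS]IH; congr diffops.
by apply: dual_ext => m; rewrite /diffop mulr0 subr0.
Qed.

Lemma diffops_comb s r :
  diffops s (comb r) = fun m => coef_sum r (fun k => diffops s (xiphi k.1 k.2) m).
Proof.
elim: r => [|t r IH].
  have -> : comb [::] = fun _ => 0.
    by apply: dual_ext => m; rewrite /comb /coef_sum big_nil.
  by rewrite diffops0; apply: dual_ext => m; rewrite /coef_sum big_nil.
have -> : comb (t :: r) = fun m => t.2 * xiphi t.1.1 t.1.2 m + 1 * comb r m.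
  by apply: dual_ext => m; rewrite /comb /coef_sum big_cons mul1r.
rewrite diffops_lin IH; apply: dual_ext => m.
by rewrite /coef_sum big_cons mul1r.
Qed.

Lemma diffop_xiphi l n mu :
  diffop l (xiphi n mu) = fun m => (mu - l) * xiphi n mu m + n%:R * xiphi n.-1 mu m.
Proof. by apply: dual_ext => m; rewrite /diffop xiphiS; ringC. Qed.

Lemma diffops_xiphi_eq0 s n mu :
  (n < count_mem mu s)%N -> diffops s (xiphi n mu) = fun _ => 0.
Proof.
elim: s n => [|l s IH] n //= lt_n_s; rewrite diffop_xiphi diffops_lin.
apply: dual_ext => m.
move: lt_n_s; have [->|neq_lmu] := eqVneq l mu; rewrite ?eqxx ?(negPf neq_lmu) /=.
  rewrite subrr mul0r add0r add1n; case: n => [|n] lt_n_s; first by rewrite mul0r.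
  by rewrite IH ?mulr0.
move=> lt_n_s; rewrite IH ?mulr0 ?add0r //; case: n lt_n_s => [|n] lt_n_s; first by rewrite mul0r.
by rewrite IH ?mulr0 // (ltnW lt_n_s).
Qed.

Lemma eval_formE f (p : {poly C}) N :
  (size p <= N)%N -> eval_form f p = \sum_(i < N) p`_i * f i.
Proof.
move=> le_p_N; rewrite /eval_form (big_ord_widen N (fun i => p`_i * f i) le_p_N) big_mkcond.
apply: eq_bigr => i _; case: ifP => // /negbT; rewrite -leqNgt => le_p_i.
by rewrite nth_default // mul0r.
Qed.

Lemma eval_form_mulXsubC f q l : eval_form f (q * ('X - l%:P)) = eval_form (diffop l f) q.
Proof.
have le_qX : (size (q * ('X - l%:P))%R <= (size q).+1)%N.
  by apply: (leq_trans (size_polyMleq _ _)); rewrite size_XsubC addn2.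
rewrite (eval_formE _ _ _ le_qX) (eval_formE _ _ _ (leqnn (size q))).
under eq_bigr do rewrite mulrBr coefB coefMX coefMC mulrBl.
rewrite sumrB big_ord_recl big_ord_recr /= [q`_(size q)]nth_default // !mul0r add0r addr0.
by rewrite -sumrB; apply: eq_bigr => i _; rewrite /diffop; ringC.
Qed.

Lemma eval_form_mul_prodXsubC f q s :
  eval_form f (q * \prod_(z <- s) ('X - z%:P)) = eval_form (diffops s f) q.
Proof.
elim: s f => [|l s IH] f /=; first by rewrite big_nil mulr1.
by rewrite big_cons mulrCA mulrC eval_form_mulXsubC IH.
Qed.

Lemma eval_formXn f m : eval_form f 'X^m = f m.
Proof.
rewrite (eval_formE _ _ m.+1) ?size_polyXn // big_ord_recr big1 => [|i _].
  by rewrite coefXn eqxx mul1r /= add0r.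
by rewrite coefXn (ltn_eqF (ltn_ord i)) mul0r.
Qed.

Lemma eval_formZ f c p : eval_form f (c *: p) = c * eval_form f p.
Proof.
rewrite (eval_formE _ _ (size p)) ?size_scale_leq // /eval_form mulr_sumr.
by apply: eq_bigr => i _; rewrite coefZ mulrA.
Qed.

Lemma eval_form0 p : eval_form (fun _ => 0) p = 0.
Proof. by rewrite /eval_form big1 // => i _; rewrite mulr0. Qed.

(* Each term [(n, mu, c)] is annihilated by [n + 1] factors ['X - mu]. *)
Definition annihilating_roots (r : seq term) : seq C :=
  flatten [seq nseq t.1.1.+1 t.1.2 | t <- r].

Lemma count_annihilating_roots r t :
  t \in r -> (t.1.1 < count_mem t.1.2 (annihilating_roots r))%N.
Proof.
elim: r => [|t' r IH] //.
have -> : annihilating_roots (t' :: r) = nseq t'.1.1.+1 t'.1.2 ++ annihilating_roots r by [].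
rewrite inE count_cat => /orP[/eqP ->|t_r]; first by rewrite count_nseq /= eqxx mul1n ltn_addr.
exact: leq_trans (IH t_r) (leq_addl _ _).
Qed.

Lemma diffops_annihilating_roots r : diffops (annihilating_roots r) (comb r) = fun _ => 0.
Proof.
rewrite diffops_comb; apply: dual_ext => m; rewrite /coef_sum big1_seq // => t /andP[_ t_r].
by rewrite diffops_xiphi_eq0 ?mulr0 // count_annihilating_roots.
Qed.

Lemma spanned_in_circ f : spanned f -> in_circ f.
Proof.
move=> [r ->]; set P := \prod_(z <- annihilating_roots r) ('X - z%:P).
exists (fun p => exists q, p = q * P); split; [split; [|split]|split].
- by exists 0; rewrite mul0r.
- by move=> _ _ [q1 ->] [q2 ->]; exists (q1 + q2); rewrite mulrDl.
- by move=> _ q [q1 ->]; exists (q * q1); rewrite mulrA.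
- exists P; split; first by exists 1; rewrite mul1r.
  exact/monic_neq0/monic_prod_XsubC.
- by move=> _ [q ->]; rewrite eval_form_mul_prodXsubC diffops_annihilating_roots eval_form0.
Qed.

Lemma diffop_ker l f : diffop l f = (fun _ => 0) -> f = fun m => f 0%N * phi l m.
Proof.
move=> f_ker; apply: dual_ext; elim=> [|m IH]; first by rewrite /phi expr0 mulr1.
move/(congr1 (fun g => g m)): f_ker; rewrite /diffop => /subr0_eq ->.
by rewrite IH /phi exprS; ringC.
Qed.

Lemma diffop_preimage_xiphi l n mu : exists2 h, spanned h & diffop l h = xiphi n mu.
Proof.
have [<-|neq_mul] := eqVneq mu l.
  exists (fun m => n.+1%:R^-1 * xiphi n.+1 mu m); first exact/spannedZ/spanned_xiphi.
  rewrite diffopZ diffop_xiphi; apply: dual_ext => m.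
  by rewrite subrr mul0r add0r mulrA mulVf ?mul1r // pnatr_eq0.
have nz_mul : mu - l != 0 by rewrite subr_eq0.
elim: n => [|n [h h_span h_pre]].
  exists (fun m => (mu - l)^-1 * xiphi 0 mu m); first exact/spannedZ/spanned_xiphi.
  rewrite diffopZ diffop_xiphi; apply: dual_ext => m.
  by rewrite mul0r addr0 mulrA mulVf ?mul1r.
exists (fun m => (mu - l)^-1 * xiphi n.+1 mu m + (- ((mu - l)^-1 * n.+1%:R)) * h m).
  exact/spanned_lin/h_span/spanned_xiphi.
rewrite diffop_lin diffop_xiphi h_pre; apply: dual_ext => m /=.
by rewrite mulrDr mulrA mulVf // mul1r; ringC.
Qed.

Lemma diffop_preimage l g : spanned g -> exists2 h, spanned h & diffop l h = g.
Proof.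
move=> [r ->]; elim: r => [|t r [h h_span h_pre]].
  exists (fun _ => 0); first exact: spanned0.
  by apply: dual_ext => m; rewrite /diffop /comb /coef_sum big_nil mulr0 subr0.
have [h1 h1_span h1_pre] := diffop_preimage_xiphi l t.1.1 t.1.2.
exists (fun m => t.2 * h1 m + 1 * h m); first exact: spanned_lin.
rewrite diffop_lin h1_pre h_pre; apply: dual_ext => m.
by rewrite /comb /coef_sum big_cons mul1r.
Qed.

Lemma spanned_of_diffops s f : diffops s f = (fun _ => 0) -> spanned f.
Proof.
elim: s f => [|l s IH] f /=; first by move->; exact: spanned0.
move=> /IH /(diffop_preimage l) [h h_span h_pre].
have : diffop l (fun m => 1 * f m + (-1) * h m) = fun _ => 0.
  by rewrite diffop_lin h_pre; apply: dual_ext => m; ringC.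
move/diffop_ker => f_sub_h.
have -> : f = fun m => 1 * h m + (f 0%N - h 0%N) * xiphi 0 l m.
  apply: dual_ext => m; have := congr1 (fun g => g m) f_sub_h.
  by rewrite /= !mul1r !mulN1r => f_m; rewrite -[f m](subrK (h m)) f_m; ringC.
exact/spanned_lin/spanned_xiphi.
Qed.

Lemma in_circ_spanned f : in_circ f -> spanned f.
Proof.
move=> [I [[_ [_ I_mul]] [[p [I_p nz_p]] f_I]]].
have [s p_split] := closed_field_poly_normal p.
apply: (spanned_of_diffops s); apply: dual_ext => m.
have /eqP := f_I _ (I_mul _ 'X^m I_p).
rewrite p_split -scalerAr eval_formZ eval_form_mul_prodXsubC eval_formXn.
by rewrite mulf_eq0 lead_coef_eq0 (negPf nz_p) => /eqP.
Qed.

Lemma in_circE f : in_circ f <-> spanned f.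
Proof. by split; [exact: in_circ_spanned | exact: spanned_in_circ]. Qed.

(** * Linear independence *)

Lemma diffops_nseq_xiphi n mu : diffops (nseq n mu) (xiphi n mu) = fun m => n`!%:R * phi mu m.
Proof.
elim: n => [|n IH]; first by apply: dual_ext => m; rewrite mul1r.
rewrite -[diffops _ _]/(diffops (nseq n mu) (diffop mu (xiphi n.+1 mu))).
rewrite diffop_xiphi diffops_lin IH; apply: dual_ext => m.
by rewrite subrr mul0r add0r factS natrM mulrA.
Qed.

Lemma diffops_phi s a mu :
  diffops s (fun m => a * phi mu m) = fun m => a * \prod_(nu <- s) (mu - nu) * phi mu m.
Proof.
elim: s a => [|nu s IH] a /=; first by apply: dual_ext => m; rewrite big_nil mulr1.
have -> : diffop nu (fun m => a * phi mu m) = fun m => a * (mu - nu) * phi mu m.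
  by apply: dual_ext => m; rewrite /diffop /phi exprS; ringC.
by rewrite IH; apply: dual_ext => m; rewrite big_cons mulrA.
Qed.

Definition coef (r : seq term) (k : nat * C) : C := \sum_(t <- r | t.1 == k) t.2.

Definition keys (r : seq term) : seq (nat * C) := undup [seq t.1 | t <- r].

Lemma mem_keys r t : t \in r -> t.1 \in keys r.
Proof. by move=> t_r; rewrite mem_undup map_f. Qed.

Lemma coef_notin r k : k \notin keys r -> coef r k = 0.
Proof.
move=> k_r; rewrite /coef big1_seq // => t /andP[/eqP t_k t_r].
by move: k_r; rewrite -t_k mem_keys.
Qed.

Lemma big_seq_single (T : eqType) (V : nmodType) (s : seq T) x (F : T -> V) :
  uniq s -> x \in s -> {in s, forall y, y != x -> F y = 0} -> \sum_(y <- s) F y = F x.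
Proof.
move=> s_uniq x_s F0; rewrite (bigD1_seq x) // big1_seq; first exact: addr0.
by move=> y /andP[neq_x y_s]; exact: F0.
Qed.

Lemma coef_sumE r H : coef_sum r H = \sum_(k <- keys r) coef r k * H k.
Proof.
rewrite /coef_sum /coef; under [RHS]eq_bigr do rewrite big_distrl big_mkcond.
rewrite exchange_big; apply: eq_big_seq => t t_r.
rewrite (big_seq_single _ _ _ t.1) ?undup_uniq ?mem_keys ?eqxx // => k _.
by rewrite eq_sym => /negPf ->.
Qed.

Section Independence.

Variable r : seq term.

Let N := \max_(t <- r) t.1.1.+1.

Lemma keys_deg_lt k : k \in keys r -> (k.1 < N)%N.
Proof.
rewrite mem_undup => /mapP[t t_r ->].
exact: (@leq_bigmax_seq _ r predT (fun t => t.1.1.+1) t).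
Qed.

Definition far_roots (mu : C) : seq C := flatten [seq nseq N t.1.2 | t <- r & t.1.2 != mu].

Lemma far_roots_neq mu nu : nu \in far_roots mu -> nu != mu.
Proof.
move=> /flattenP[s /mapP[t t_r ->] /nseqP[-> _]].
by move: t_r; rewrite mem_filter => /andP[].
Qed.

Lemma count_far_roots mu k : k \in keys r -> k.2 != mu -> (N <= count_mem k.2 (far_roots mu))%N.
Proof.
rewrite mem_undup => /mapP[t t_r {k}->] neq_mu.
rewrite count_flatten sumnE !big_map big_filter (big_rem t) ?t_r //= neq_mu.
by rewrite count_nseq /= eqxx mul1n leq_addr.
Qed.

(* Applied to [comb r] and evaluated at 0, this operator isolates the coefficient of
   [xi^n phi_mu] once those of the [xi^k phi_mu], [k > n], are known to vanish. *)
Definition isolating_roots (n : nat) (mu : C) : seq C := nseq n mu ++ far_roots mu.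

Lemma diffops_isolating_eq0 n mu k : k \in keys r -> k.2 != mu \/ (k.1 < n)%N ->
  diffops (isolating_roots n mu) (xiphi k.1 k.2) = fun _ => 0.
Proof.
move=> k_r k_far; apply: diffops_xiphi_eq0; rewrite count_cat.
have [eq_mu|neq_mu] := eqVneq k.2 mu.
  case: k_far => [|lt_n]; first by rewrite eq_mu eqxx.
  by rewrite eq_mu count_nseq /= eqxx mul1n (leq_trans lt_n) ?leq_addr.
apply: leq_trans (keys_deg_lt _ k_r) _.
by rewrite (leq_trans (count_far_roots _ _ k_r neq_mu)) ?leq_addl.
Qed.

Lemma diffops_isolating_neq0 n mu : diffops (isolating_roots n mu) (xiphi n mu) 0%N != 0.
Proof.
rewrite diffops_cat diffops_nseq_xiphi diffops_phi /phi expr0 mulr1.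
rewrite mulf_eq0 pnatr_eq0 eqn0Ngt fact_gt0 prodf_seq_eq0.
by apply/hasPn => nu /far_roots_neq neq_mu; rewrite subr_eq0 eq_sym.
Qed.

Lemma comb_eq0_coef : comb r = (fun _ => 0) -> forall k, coef r k = 0.
Proof.
move=> r_eq0 [n mu].
suff coef_ge d n' : (N <= n' + d)%N -> coef r (n', mu) = 0 by apply: (coef_ge N); rewrite leq_addl.
elim: d n' => [|d IH] n' le_N.
  by apply: coef_notin; apply: contraTN le_N => /keys_deg_lt; rewrite addn0 -ltnNge.
have [/IH//|lt_N] := leqP N (n' + d).
have [k_r|/coef_notin//] := boolP ((n', mu) \in keys r).
have := congr1 (fun f => f 0%N) (diffops_comb (isolating_roots n' mu) r).
rewrite r_eq0 diffops0 coef_sumE (big_seq_single _ _ _ (n', mu)) ?undup_uniq //; last first.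
  move=> [k nu] k_r' neq_k; case: (ltnP k n') => [lt_k|ge_k].
    by rewrite diffops_isolating_eq0 ?mulr0 //; right.
  have [eq_nu|neq_nu] := eqVneq nu mu; last by rewrite diffops_isolating_eq0 ?mulr0 //; left.
  rewrite eq_nu IH ?mul0r //; move: neq_k; rewrite eq_nu xpair_eqE eqxx andbT => neq_k.
  by rewrite (leq_trans le_N) // -addSnnS leq_add2r ltn_neqAle eq_sym neq_k ge_k.
move/esym/eqP; rewrite mulf_eq0 (negPf (diffops_isolating_neq0 _ _)) orbF.
by move/eqP.
Qed.

End Independence.

(** * The group algebra C G_a *)

Lemma finsupp_sum (x : GA) (T : seq C) (G : C -> C) : uniq T -> {subset finsupp x <= T} ->
  \sum_(l <- finsupp x) x l * G l = \sum_(l <- T) x l * G l.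
Proof.
move=> T_uniq supp_T.
transitivity (\sum_(l <- T | l \in finsupp x) x l * G l); last first.
  rewrite big_mkcond; apply: eq_bigr => l _.
  by case: ifP => // /negbT/fsfun_dflt ->; rewrite mul0r.
rewrite -[RHS]big_filter; apply: perm_big; apply: uniq_perm; rewrite ?filter_uniq ?fset_uniq //.
by move=> l; rewrite mem_filter andb_idr //; apply: supp_T.
Qed.

Lemma finsupp_sum_regroup (I : eqType) (x : GA) (R : seq I) (k : I -> C) (F : I -> C) G :
  (forall l, x l = \sum_(i <- R) (k i == l)%:R * F i) ->
  \sum_(l <- finsupp x) x l * G l = \sum_(i <- R) F i * G (k i).
Proof.
move=> x_def; rewrite (finsupp_sum _ (undup (finsupp x ++ map k R))) ?undup_uniq //; last first.
  by move=> l l_x; rewrite mem_undup mem_cat l_x.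
under eq_bigr do rewrite x_def mulr_suml.
rewrite exchange_big; apply: eq_big_seq => i i_R.
rewrite (big_seq_single _ _ _ (k i)) ?undup_uniq ?eqxx ?mul1r //.
  by rewrite mem_undup mem_cat map_f ?orbT.
by move=> l _; rewrite eq_sym => /negPf ->; rewrite !mul0r.
Qed.

Lemma fsfun_regroup (v : GA) y : v y = \sum_(b <- finsupp v) (b == y)%:R * v b.
Proof.
have [y_v|y_v] := boolP (y \in finsupp v); last first.
  rewrite fsfun_dflt // big1_seq // => b /andP[_ b_v].
  have neq_by : b != y by apply: contraNneq y_v => <-.
  by rewrite (negPf neq_by) mul0r.
rewrite (big_seq_single _ _ _ y) ?fset_uniq ?eqxx ?mul1r // => b _.
by move=> /negPf ->; rewrite mul0r.
Qed.

Definition phi_part (r : seq term) : GA :=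
  [fsfun l in [fset t.1.2 | t in r]%fset => coef r (0%N, l) | 0].

Lemma phi_partE r l : phi_part r l = coef r (0%N, l).
Proof.
rewrite /phi_part fsfun_fun; case: ifP => // /negbT l_r; rewrite coef_notin //.
apply: contra l_r; rewrite mem_undup => /mapP[t t_r /(congr1 snd) l_t].
by apply/imfsetP; exists t.
Qed.

Lemma finsupp_sum_phi_part r G :
  \sum_(l <- finsupp (phi_part r)) phi_part r l * G l =
  coef_sum r (fun k => (k.1 == 0%N)%:R * G k.2).
Proof.
rewrite (finsupp_sum_regroup _ _ [seq t <- r | t.1.1 == 0%N] (fun t => t.1.2) (fun t => t.2)).
  rewrite big_filter big_mkcond /coef_sum; apply: eq_bigr => t _.
  by case: eqP => _ /=; ringC.
move=> l; rewrite phi_partE /coef big_filter big_mkcond [RHS]big_mkcond.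
apply: eq_bigr => -[[n mu] c] _; rewrite xpair_eqE.
by case: eqP => _; case: eqP => _ /=; ringC.
Qed.

Lemma eps_a_phi_part r : eps_a (phi_part r) = comb r 0%N.
Proof.
rewrite /eps_a; under eq_bigr do rewrite -[phi_part r _]mulr1.
rewrite finsupp_sum_phi_part; apply: eq_bigr => t _; rewrite xiphi_at0 mulr1.
by congr (_ * _); case: eqP.
Qed.

Lemma gmul_phi_part r1 r2 l :
  gmul (phi_part r1) (phi_part r2) l = coef_sum (mul_terms r1 r2) (fun k => (k == (0%N, l))%:R).
Proof.
rewrite /gmul finsupp_sum_phi_part coef_sum_mul_terms /coef_sum; apply: eq_bigr => t1 _.
rewrite phi_partE /coef big_mkcond mulr_sumr mulr_sumr; apply: eq_bigr => t2 _.
move: t1 t2 => [[n1 mu1] c1] [[n2 mu2] c2] /=.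
rewrite !xpair_eqE addn_eq0.
have -> : (mu2 == l - mu1) = (mu1 + mu2 == l) by rewrite eq_sym subr_eq [mu2 + _]addrC.
by case: eqP => _; case: eqP => _; case: eqP => _ /=; ringC.
Qed.

Definition ga_terms (x : GA) : seq term := [seq (0%N, l, x l) | l <- finsupp x].

Lemma Lmap_comb c x : Lmap c x = comb ((1%N, 0, c) :: ga_terms x).
Proof. by apply: dual_ext => m; rewrite /Lmap /comb /coef_sum big_cons big_map xi_xiphi. Qed.

Lemma coef_sum_Lmap_terms c x H :
  coef_sum ((1%N, 0, c) :: ga_terms x) H = c * H (1%N, 0) + \sum_(l <- finsupp x) x l * H (0%N, l).
Proof. by rewrite /coef_sum big_cons big_map. Qed.

Lemma Psi1_mul (s : seq (GA * GA)) (x : GA) : (forall l, x l = \sum_(uv <- s) gmul uv.1 uv.2 l) ->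
  Psi1 x = fun m => \sum_(uv <- s) conv (Psi1 uv.1) (Psi1 uv.2) m.
Proof.
move=> x_def; apply: dual_ext => m.
pose R := [seq (uv, ab) | uv <- s, ab <- [seq (a, b) | a <- finsupp uv.1, b <- finsupp uv.2]].
rewrite /Psi1.
rewrite (finsupp_sum_regroup _ _ R (fun i => i.2.1 + i.2.2) (fun i => i.1.1 i.2.1 * i.1.2 i.2.2)).
  rewrite big_allpairs_dep; apply: eq_bigr => uv _; rewrite big_allpairs.
  rewrite (conv_suml _ (finsupp uv.1) uv.1 phi); apply: eq_bigr => a _.
  rewrite (conv_sumr _ (finsupp uv.2) uv.2 phi) mulr_sumr; apply: eq_bigr => b _.
  by rewrite conv_phi; ringC.
move=> l; rewrite x_def big_allpairs_dep; apply: eq_bigr => uv _.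
rewrite /gmul big_allpairs; apply: eq_bigr => a _.
rewrite (fsfun_regroup uv.2 (l - a)) mulr_sumr; apply: eq_bigr => b _.
have -> : (b == l - a) = (a + b == l) by rewrite eq_sym subr_eq [b + _]addrC.
by ringC.
Qed.

(** * J modulo J^2 *)

Lemma inJE f : inJ f <-> spanned f /\ f 0%N = 0.
Proof. by rewrite /inJ in_circE. Qed.

Lemma inJ_xiphi n mu : (0 < n)%N -> inJ (xiphi n mu).
Proof.
by move=> n_gt0; apply/inJE; split; [exact: spanned_xiphi | rewrite xiphi_at0 eqn0Ngt n_gt0].
Qed.

Lemma inJ_xi : inJ xi.
Proof. by rewrite xi_xiphi; exact: inJ_xiphi. Qed.

Lemma inJ_phi_sub mu : inJ (fun m => phi mu m - phi 0 m).
Proof.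
apply/inJE; split; last by rewrite /phi !expr0 subrr.
have -> : (fun m => phi mu m - phi 0 m) = fun m => 1 * xiphi 0 mu m + (-1) * xiphi 0 0 m.
  by apply: dual_ext => m; rewrite mul1r mulN1r.
exact/spanned_lin/spanned_xiphi/spanned_xiphi.
Qed.

Lemma inJ_scale a f : inJ f -> inJ (fun m => a * f m).
Proof.
move=> /inJE[f_span f0]; apply/inJE; split; last by rewrite f0 mulr0.
exact: spannedZ.
Qed.

Lemma inJ2_conv u v : inJ u -> inJ v -> inJ2 (conv u v).
Proof. by move=> u_J v_J; exists [:: (u, v)]; split => [|n]; [constructor | rewrite big_seq1]. Qed.

Lemma inJ2_lin a b f g : inJ2 f -> inJ2 g -> inJ2 (fun m => a * f m + b * g m).
Proof.
have scale c h : inJ2 h -> exists2 s, List.Forall (fun uv => inJ uv.1 /\ inJ uv.2) s &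
    forall n, c * h n = \sum_(uv <- s) conv uv.1 uv.2 n.
  move=> [s [s_J h_s]]; exists [seq ((fun m => c * uv.1 m), uv.2) | uv <- s].
    apply/List.Forall_map; apply: List.Forall_impl s_J => uv [u_J v_J].
    by split => //; exact: inJ_scale.
  move=> n; rewrite h_s big_map mulr_sumr; apply: eq_bigr => uv _.
  by rewrite /conv mulr_sumr; apply: eq_bigr => k _ /=; ringC.
move=> /(scale a)[s1 s1_J f_s1] /(scale b)[s2 s2_J g_s2]; exists (s1 ++ s2); split.
  by apply/List.Forall_app.
by move=> n; rewrite big_cat f_s1 g_s2.
Qed.

Lemma inJ2_0 : inJ2 (fun _ => 0).
Proof. by exists [::]; split => // n; rewrite big_nil. Qed.

Lemma inJ2_coef_sum r (F : nat * C -> dual) :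
  (forall k, inJ2 (F k)) -> inJ2 (fun m => coef_sum r (fun k => F k m)).
Proof.
move=> F_J2; elim: r => [|t r IH].
  have -> : (fun m => coef_sum [::] (fun k => F k m)) = fun _ => 0.
    by apply: dual_ext => m; rewrite /coef_sum big_nil.
  exact: inJ2_0.
have -> : (fun m => coef_sum (t :: r) (fun k => F k m)) =
          fun m => t.2 * F t.1 m + 1 * coef_sum r (fun k => F k m).
  by apply: dual_ext => m; rewrite /coef_sum big_cons mul1r.
exact: inJ2_lin.
Qed.

Lemma inJ2_xiphi_sub n mu :
  inJ2 (fun m => xiphi n mu m - (n == 1%N)%:R * xi m - (n == 0%N)%:R * phi mu m).
Proof.
case: n => [|[|n]].
- have -> : (fun m => xiphi 0 mu m - (0 == 1)%N%:R * xi m - (0 == 0)%N%:R * phi mu m) =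
            fun _ => 0.
    by apply: dual_ext => m; rewrite mul0r subr0 mul1r subrr.
  exact: inJ2_0.
- have -> : (fun m => xiphi 1 mu m - (1 == 1)%N%:R * xi m - (1 == 0)%N%:R * phi mu m) =
            conv xi (fun m => phi mu m - phi 0 m).
    by rewrite conv_xil xi_xiphi; apply: dual_ext => m; rewrite /= /xi_mul; ringC.
  exact: inJ2_conv inJ_xi (inJ_phi_sub mu).
have -> : (fun m => xiphi n.+2 mu m - (n.+2 == 1)%N%:R * xi m - (n.+2 == 0)%N%:R * phi mu m) =
          conv xi (xiphi n.+1 mu).
  by rewrite conv_xil; apply: dual_ext => m; rewrite !mul0r !subr0.
exact: inJ2_conv inJ_xi (inJ_xiphi _ mu (ltn0Sn n)).
Qed.

Lemma comb_at0 r : comb r 0%N = coef_sum r (fun k => (k.1 == 0%N)%:R).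
Proof. by rewrite /comb /coef_sum; apply: eq_bigr => t _; rewrite xiphi_at0. Qed.

Lemma Lmap_inJ c x : in_ker_eps_a x -> inJ (Lmap c x).
Proof.
move=> x_ker; apply/inJE; rewrite Lmap_comb; split; first by eexists.
rewrite comb_at0 coef_sum_Lmap_terms mulr0 add0r -[RHS]x_ker /eps_a.
by apply: eq_bigr => l _; rewrite mulr1.
Qed.

Lemma Lmap_onto_modJ2 f : inJ f ->
  exists (c : C) (x : GA), in_ker_eps_a x /\ inJ2 (fun n => f n - Lmap c x n).
Proof.
move=> /inJE[[r ->] r0]; exists (coef_sum r (fun k => (k.1 == 1%N)%:R)), (phi_part r); split.
  by rewrite /in_ker_eps_a eps_a_phi_part.
have -> : (fun n => comb r n - Lmap (coef_sum r (fun k => (k.1 == 1%N)%:R)) (phi_part r) n) =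
    fun m => coef_sum r (fun k =>
      xiphi k.1 k.2 m - (k.1 == 1%N)%:R * xi m - (k.1 == 0%N)%:R * phi k.2 m).
  apply: dual_ext => m; rewrite /Lmap /Psi1 finsupp_sum_phi_part /comb /coef_sum.
  rewrite mulr_suml -big_split -sumrB; apply: eq_bigr => t _ /=; ringC.
by apply: inJ2_coef_sum => -[n mu]; exact: inJ2_xiphi_sub.
Qed.

Lemma Lmap0 x : Lmap 0 x = Psi1 x.
Proof. by apply: dual_ext => m; rewrite /Lmap mul0r add0r. Qed.

Lemma inJ2_Psi1 x : in_ker_eps_a2 x -> inJ2 (Psi1 x).
Proof.
move=> [s [s_ker x_s]]; exists [seq (Psi1 uv.1, Psi1 uv.2) | uv <- s]; split.
  apply/List.Forall_map; apply: List.Forall_impl s_ker => uv [u_ker v_ker].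
  by rewrite -!Lmap0; split; exact: Lmap_inJ.
by move=> n; rewrite big_map (Psi1_mul _ _ x_s).
Qed.

Lemma coef_sum_flatten (L : seq (seq term)) H : coef_sum (flatten L) H = \sum_(r <- L) coef_sum r H.
Proof. exact: big_flatten. Qed.

Lemma inJ2_comb h : inJ2 h -> exists P : seq (seq term * seq term),
  all (fun p => (comb p.1 0%N == 0) && (comb p.2 0%N == 0)) P /\
  h = comb (flatten [seq mul_terms p.1 p.2 | p <- P]).
Proof.
move=> [s [s_J h_s]]; have -> : h = fun n => \sum_(uv <- s) conv uv.1 uv.2 n by apply: dual_ext.
elim: s s_J {h_s} => [|uv s IH] /=.
  by exists [::]; split => //; apply: dual_ext => m; rewrite /comb /coef_sum !big_nil.
move=> /List.Forall_cons_iff[[/inJE[[r1 u_r1] u0] /inJE[[r2 v_r2] v0]] /IH[P [P0 s_P]]].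
exists ((r1, r2) :: P); split; first by rewrite /= -u_r1 -v_r2 u0 v0 eqxx.
apply: dual_ext => m; rewrite big_cons (congr1 (fun f => f m) s_P) u_r1 v_r2 conv_comb.
by rewrite /comb -coef_sum_cat.
Qed.

Lemma coef_sum_mul_terms_deg1 r1 r2 : comb r1 0%N = 0 -> comb r2 0%N = 0 ->
  coef_sum (mul_terms r1 r2) (fun k => (k.1 == 1%N)%:R) = 0.
Proof.
rewrite !comb_at0 => r1_0 r2_0.
transitivity (coef_sum r1 (fun k => (k.1 == 0%N)%:R) * coef_sum r2 (fun k => (k.1 == 1%N)%:R) +
              coef_sum r1 (fun k => (k.1 == 1%N)%:R) * coef_sum r2 (fun k => (k.1 == 0%N)%:R)).
  rewrite coef_sum_mul_terms /coef_sum !mulr_suml -big_split; apply: eq_bigr => t1 _.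
  rewrite !mulr_sumr -big_split; apply: eq_bigr => t2 _.
  by case: t1 t2 => [[[|[|n1]] mu1] c1] [[[|[|n2]] mu2] c2] /=; ringC.
by rewrite r1_0 r2_0 mul0r mulr0 addr0.
Qed.

Lemma inJ2_Lmap c x : inJ2 (Lmap c x) -> c = 0 /\ in_ker_eps_a2 x.
Proof.
move=> /inJ2_comb[P [P0]]; set R := flatten _ => Lmap_R.
have coef_sum_R H : coef_sum ((1%N, 0, c) :: ga_terms x) H = coef_sum R H.
  have /comb_eq0_coef coef0 : comb (((1%N, 0, c) :: ga_terms x) ++ scale_terms (-1) R) = fun _ => 0.
    apply: dual_ext => m; rewrite /comb coef_sum_cat coef_sum_scale.
    by rewrite -/(comb _ m) -/(comb R m) -Lmap_comb Lmap_R mulN1r subrr.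
  apply/eqP; rewrite -subr_eq0 -mulN1r -coef_sum_scale -coef_sum_cat coef_sumE.
  by rewrite big1 // => k _; rewrite coef0 mul0r.
split.
  have := coef_sum_R (fun k => (k.1 == 1%N)%:R); rewrite coef_sum_Lmap_terms eqxx mulr1.
  rewrite big1 ?addr0 => [->|l _]; last by rewrite mulr0.
  rewrite coef_sum_flatten big_map big1_seq // => p /andP[_ p_P].
  by have /andP[/eqP p1 /eqP p2] := allP P0 p p_P; exact: coef_sum_mul_terms_deg1.
exists [seq (phi_part p.1, phi_part p.2) | p <- P]; split.
  elim: P P0 {R Lmap_R coef_sum_R} => [|p P IH] //= /andP[/andP[/eqP p1 /eqP p2] P0].
  by constructor; [rewrite /in_ker_eps_a !eps_a_phi_part | exact: IH].
move=> l; transitivity (coef_sum R (fun k => (k == (0%N, l))%:R)); last first.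
  by rewrite coef_sum_flatten !big_map; apply: eq_bigr => p _; rewrite gmul_phi_part.
rewrite -coef_sum_R coef_sum_Lmap_terms xpair_eqE /= mulr0 add0r (fsfun_regroup x l).
by apply: eq_bigr => l' _; rewrite xpair_eqE eqxx mulrC.
Qed.

Theorem lemma3p3 :
  (forall (c : C) (x : GA), in_ker_eps_a x -> inJ (Lmap c x)) /\
  (forall f : dual, inJ f ->
     exists (c : C) (x : GA), in_ker_eps_a x /\ inJ2 (fun n => f n - Lmap c x n)) /\
  (forall (c : C) (x : GA), in_ker_eps_a x ->
     (inJ2 (Lmap c x) <-> c = 0 /\ in_ker_eps_a2 x)).
Proof.
split; first exact: Lmap_inJ.
split; first exact: Lmap_onto_modJ2.
move=> c x _; split; first exact: inJ2_Lmap.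
by case=> -> /inJ2_Psi1; rewrite Lmap0.
Qed.
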